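(* There is a universal constant $C\ge 2$ such that the following holds. Let $L,M,n\ge1$. For every unsatisfiable CNF $F$ over $n$ variables and every $s_F\ge C\cdot(nLM+|F|)$ such that every resolution refutation of $F$ has more than $s_F$ clauses, there is a decision tree reduction of block-depth $O(n)$ from $\mathrm{rwPHP}(\mathsf{PLS})$ instances with parameters $L,M$ to $\textsc{Refuter}(s(F\vdash_{\mathsf{Res}}\bot)\le s_F)$.
   Context: $[n]=\{0,\dots,n-1\}$; $|F|$ is the number of clauses of $F$. $\textsc{Iter}$ on $[L]$: input $S:[L]\to[L]$; a solution is $x$ with $x=0\wedge S(0)=0$, or $S(x)<x$, or $S(x)>x\wedge S(S(x))=S(x)$. $\mathrm{rwPHP}(\mathsf{PLS})$ with parameters $L,M$: input consists of $f:[M]\to[2M]$; for each $y\in[2M]$ an $\textsc{Iter}$ instance $S_y:[L]\to[L]$; and for each $y$ a function $g_y:[L]\to[M]$. A solution is a pair $(y,a)$ with $a$ a solution of the $\textsc{Iter}$ instance $S_y$ and $f(g_y(a))\ne y$. Resolution refutation format: axioms $C_{-m},\dots,C_{-1}$ are the clauses of $F$; a purported refutation is a sequence of nodes $C_0,\dots,C_{L'-1}$, each with a set of literals, a tag ``resolution'' (with indices $-m\le j,k<i$ and a variable $x_a$) or ``weakening'' (with an index $-m\le j<i$). Node $i$ is valid if for resolution $C_j=x_a\vee D$, $C_k=\overline{x}_a\vee E$, $C_i=D\vee E$; for weakening $C_i=C_j\vee D$; and $C_{L'-1}=\bot$. $\textsc{Refuter}(s(F\vdash_{\mathsf{Res}}\bot)\le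 s_F)$: input is a purported refutation of $F$ with at most $s_F$ nodes; a solution is an index of an invalid node. Each node is a block; block-depth counts distinct blocks queried, and a decision tree reduction computes each node of the output and maps solutions back via decision trees on the input. *)

From mathcomp Require Import all_boot.
Set Implicit Arguments.
Unset Strict Implicit.
Unset Printing Implicit Defensive.

(* A literal is (variable, polarity): (a, true) = x_a, (a, false) = ~x_a. *)
Definition lit (n : nat) := ('I_n * bool)%type.
Definition clause (n : nat) := {set lit n}.
Definition cnf (n : nat) := seq (clause n).

Definition pos_lit (n : nat) (a : 'I_n) : lit n := (a, true).
Definition neg_lit (n : nat) (a : 'I_n) : lit n := (a, false).

Definition sat_lit (n : nat) (sigma : 'I_n -> bool) (l : lit n) : bool :=
  sigma l.1 == l.2.
Definition sat_clause (n : nat) (sigma : 'I_n -> bool) (C : clause n) : bool :=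
  [exists l in C, sat_lit sigma l].
Definition unsat_cnf (n : nat) (F : cnf n) : Prop :=
  forall sigma : 'I_n -> bool, ~~ all (sat_clause sigma) F.

(* A reference to an earlier line: inl a = axiom (a-th clause of F, i.e. one of
   C_{-m},...,C_{-1}), inr j = node C_j. *)
Inductive rule (m s n : nat) : Type :=
| Resol of ('I_m + 'I_s) & ('I_m + 'I_s) & 'I_n
| Weaken of ('I_m + 'I_s).

Record rnode (m s n : nat) : Type := RNode {
  rn_clause : clause n;
  rn_rule : rule m s n }.

Arguments Resol {m s n}.
Arguments Weaken {m s n}.
Arguments RNode {m s n}.
Arguments rn_clause {m s n}.
Arguments rn_rule {m s n}.

Definition pref (n : nat) (F : cnf n) (s : nat) := 'I_s -> rnode (size F) s n.

Definition ref_clause (n : nat) (F : cnf n) (s : nat) (P : pref F s)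
  (r : 'I_(size F) + 'I_s) : clause n :=
  match r with inl a => nth set0 F a | inr j => rn_clause (P j) end.

(* the reference points to an index -m <= j < i *)
Definition ref_before (m s : nat) (i : 'I_s) (r : 'I_m + 'I_s) : bool :=
  match r with inl _ => true | inr j => (j < i)%N end.

Definition node_valid (n : nat) (F : cnf n) (s : nat) (P : pref F s) (i : 'I_s)
  : Prop :=
  (match rn_rule (P i) with
   | Resol j k a =>
       ref_before i j /\ ref_before i k /\
       exists D E : clause n,
         ref_clause P j = pos_lit a |: D /\
         ref_clause P k = neg_lit a |: E /\
         rn_clause (P i) = D :|: E
   | Weaken j =>
       ref_before i j /\
       exists D : clause n, rn_clause (P i) = ref_clause P j :|: D
   end) /\
  ((i : nat) = s.-1 -> rn_clause (P i) = set0).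

Definition is_refutation (n : nat) (F : cnf n) (s : nat) (P : pref F s) : Prop :=
  (0 < s)%N /\ forall i, node_valid P i.

Definition res_size_gt (n : nat) (F : cnf n) (sF : nat) : Prop :=
  forall (s : nat) (P : pref F s), is_refutation P -> (sF < s)%N.

(* Queries q : Q, the answer to query q lies in A q; an input is x : forall q, A q. *)
Inductive dtree (Q : Type) (A : Q -> Type) (R : Type) : Type :=
| DLeaf of R
| DQuery (q : Q) of (A q -> dtree A R).
Arguments DLeaf {Q A R}.
Arguments DQuery {Q A R}.

Fixpoint dt_eval (Q : Type) (A : Q -> Type) (R : Type) (x : forall q, A q)
  (t : dtree A R) : R :=
  match t with DLeaf r => r | DQuery q k => dt_eval x (k (x q)) end.

Fixpoint dt_queries (Q : Type) (A : Q -> Type) (R : Type) (x : forall q, A q)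
  (t : dtree A R) : seq Q :=
  match t with DLeaf _ => [::] | DQuery q k => q :: dt_queries x (k (x q)) end.

Definition dt_blockdepth_le (Q : eqType) (A : Q -> Type) (R : Type)
  (t : dtree A R) (d : nat) : Prop :=
  forall x : forall q, A q, (size (undup (dt_queries x t)) <= d)%N.

Record rw_inst (L M : nat) : Type := RwInst {
  rw_f : 'I_M -> 'I_(2 * M);
  rw_S : 'I_(2 * M) -> 'I_L -> 'I_L;
  rw_g : 'I_(2 * M) -> 'I_L -> 'I_M }.
Arguments rw_f {L M}.
Arguments rw_S {L M}.
Arguments rw_g {L M}.

(* blocks: f(x), S_y(a), g_y(a) *)
Definition rw_query (L M : nat) :=
  ('I_M + ('I_(2 * M) * 'I_L) + ('I_(2 * M) * 'I_L))%type.

Definition rw_ans (L M : nat) (q : rw_query L M) : Type :=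
  match q with
  | inl (inl _) => 'I_(2 * M)
  | inl (inr _) => 'I_L
  | inr _ => 'I_M
  end.

Definition rw_oracle (L M : nat) (x : rw_inst L M) : forall q, rw_ans q :=
  fun q => match q as q0 return rw_ans q0 with
           | inl (inl a) => rw_f x a
           | inl (inr p) => rw_S x p.1 p.2
           | inr p => rw_g x p.1 p.2
           end.

Definition iter_sol (L : nat) (S : 'I_L -> 'I_L) (a : 'I_L) : bool :=
  [|| ((a : nat) == 0) && ((S a : nat) == 0),
      (S a < a)%N
    | (a < S a)%N && (S (S a) == S a)].

Definition rw_sol (L M : nat) (x : rw_inst L M) (ya : 'I_(2 * M) * 'I_L) : bool :=
  iter_sol (rw_S x ya.1) ya.2 && (rw_f x (rw_g x ya.1 ya.2) != ya.1).

(* A decision tree reduction of block-depth <= d from rwPHP(PLS)[L,M] to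
   Refuter(s(F |-Res bot) <= sF): each output node is computed by a decision tree
   on the rwPHP input, and each Refuter solution (an invalid node index) is mapped
   back to an rwPHP solution by a decision tree on the rwPHP input. *)
Definition rw_refuter_reduction (L M n : nat) (F : cnf n) (sF d : nat) : Prop :=
  exists (out : 'I_sF -> dtree (@rw_ans L M) (rnode (size F) sF n))
         (back : 'I_sF -> dtree (@rw_ans L M) ('I_(2 * M) * 'I_L)%type),
    (forall i, dt_blockdepth_le (out i) d /\ dt_blockdepth_le (back i) d) /\
    (forall (x : rw_inst L M) (i : 'I_sF),
        ~ node_valid (F := F) (fun j => dt_eval (rw_oracle x) (out j)) i ->
        rw_sol x (dt_eval (rw_oracle x) (back i))).

From mathcomp Require Import all_boot zify.
Set Implicit Arguments. Unset Strict Implicit. Unset Printing Implicit Defensive.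

(* Identify a hole y in [2M] with a pair (x, b) in [M] x {0,1}, so that each
   application of f reads one bit off a pigeon; iterating f k times from a pigeon z
   spells a partial assignment rho_k(z) of the first k variables.  The refutation,
   laid out backwards from the final empty clause, has layers k = 0..n.  Layer k
   contains, for each pigeon x, a node with the clause falsified exactly by rho_k(x);
   for k < n it is the resolvent on x_k of the nodes for the holes (x, 0) and (x, 1),
   and for k = n it weakens an axiom falsified by the total assignment rho_n(x).  The
   node of a hole y = (x, b) at layer k carries the clause of rho_k(x) b and heads a
   chain indexed by the Iter instance S_y: its a-th node is a weakening of the
   layer-(k+1) node of the pigeon g_y(a) when f(g_y(a)) = y, and otherwise of the node
   of S_y(a) when S_y(a) > a; fixed points of S_y other than 0 get the clause of all
   literals.  A node can then only be invalid when a is a solution of S_y with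
   f(g_y(a)) <> y, and each node depends on at most n + 4 blocks. *)

Fixpoint dt_bind (Q : Type) (A : Q -> Type) (R R' : Type)
    (t : dtree A R) (k : R -> dtree A R') : dtree A R' :=
  match t with
  | DLeaf r => k r
  | DQuery q c => DQuery q (fun a => dt_bind (c a) k)
  end.

Lemma dt_eval_bind (Q : Type) (A : Q -> Type) (R R' : Type) (x : forall q, A q)
    (t : dtree A R) (k : R -> dtree A R') :
  dt_eval x (dt_bind t k) = dt_eval x (k (dt_eval x t)).
Proof. by elim: t => //= q c IH; rewrite IH. Qed.

Lemma dt_queries_bind (Q : Type) (A : Q -> Type) (R R' : Type) (x : forall q, A q)
    (t : dtree A R) (k : R -> dtree A R') :
  dt_queries x (dt_bind t k) = dt_queries x t ++ dt_queries x (k (dt_eval x t)).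
Proof. by elim: t => //= q c IH; rewrite IH. Qed.

Lemma node_valid_ext (n : nat) (F : cnf n) (s : nat) (P Q : pref F s) (i : 'I_s) :
  P =1 Q -> node_valid P i -> node_valid Q i.
Proof.
move=> PQ; have eref : ref_clause Q =1 ref_clause P by case=> r //=; rewrite PQ.
by rewrite /node_valid -PQ; case: (rn_rule (P i)) => [j k a|j]; rewrite !eref.
Qed.

Section HoleBits.
Variable M : nat.

Definition take_bit (y : 'I_(2 * M)) : bool := M <= y.

Lemma join_bit_subproof (x : 'I_M) (b : bool) : x + b * M < 2 * M.
Proof. by have := ltn_ord x; case: b => /=; lia. Qed.

Lemma drop_bit_subproof (y : 'I_(2 * M)) : y - take_bit y * M < M.
Proof. by have := ltn_ord y; rewrite /take_bit; case: leqP => /=; lia. Qed.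

Definition join_bit (x : 'I_M) (b : bool) : 'I_(2 * M) := Ordinal (join_bit_subproof x b).
Definition drop_bit (y : 'I_(2 * M)) : 'I_M := Ordinal (drop_bit_subproof y).

Lemma take_join_bit x b : take_bit (join_bit x b) = b.
Proof. by rewrite /take_bit /=; have := ltn_ord x; case: b => /=; lia. Qed.

Lemma drop_join_bit x b : drop_bit (join_bit x b) = x.
Proof. by apply: val_inj; rewrite /= take_join_bit; case: b => /=; lia. Qed.

End HoleBits.

Definition assign_clause (n : nat) (s : seq bool) : clause n :=
  [set l : lit n | (l.1 < size s) && (l.2 == ~~ nth false s l.1)].

Lemma assign_clause_nil (n : nat) : assign_clause n [::] = set0.
Proof. by apply/setP => l; rewrite !inE. Qed.

Lemma assign_clause_rcons (n : nat) (s : seq bool) (b : bool) (v : 'I_n) :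
  val v = size s -> assign_clause n (rcons s b) = (v, ~~ b) |: assign_clause n s.
Proof.
move=> vs; apply/setP => [[w p]]; rewrite !inE /= size_rcons nth_rcons xpair_eqE.
have -> : (w == v) = (val w == size s) by rewrite -vs.
case: (ltngtP w (size s)) => ws.
- by rewrite ltnS (ltnW ws).
- by rewrite ltnS leqNgt ws.
- by rewrite ws ltnSn /= orbF.
Qed.

Fixpoint decode (L M : nat) (I : rw_inst L M) (k : nat) (z : 'I_M) : seq bool :=
  if k is k'.+1 then rcons (decode I k' (drop_bit (rw_f I z))) (take_bit (rw_f I z))
  else [::].

Lemma size_decode L M (I : rw_inst L M) k z : size (decode I k z) = k.
Proof. by elim: k z => //= k IH z; rewrite size_rcons IH. Qed.

Fixpoint decode_dt (L M : nat) (k : nat) (z : 'I_M) : dtree (@rw_ans L M) (seq bool) :=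
  if k is k'.+1 then
    DQuery (inl (inl z) : rw_query L M) (fun y : 'I_(2 * M) =>
      dt_bind (decode_dt L k' (drop_bit y)) (fun s => DLeaf (rcons s (take_bit y))))
  else DLeaf [::].

Lemma decode_dtE L M (I : rw_inst L M) k z :
  dt_eval (rw_oracle I) (decode_dt L k z) = decode I k z.
Proof. by elim: k z => //= k IH z; rewrite dt_eval_bind IH. Qed.

Lemma size_decode_dt_queries L M (x : forall q, @rw_ans L M q) k z :
  size (dt_queries x (decode_dt L k z)) = k.
Proof. by elim: k z => //= k IH z; rewrite dt_queries_bind size_cat IH addn0. Qed.

Section FalsifiedAxiom.
Variables (n : nat) (F : cnf n) (F_nonempty : 0 < size F).

Definition falsified_axiom (s : seq bool) : 'I_(size F) :=
  insubd (Ordinal F_nonempty)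
    (find (fun C => ~~ sat_clause (fun v => nth false s v) C) F).

Lemma falsified_axiom_sub s : unsat_cnf F -> size s = n ->
  nth set0 F (falsified_axiom s) \subset assign_clause n s.
Proof.
move=> F_unsat sn; set sigma := fun v : 'I_n => nth false s v.
have hasF : has (fun C => ~~ sat_clause sigma C) F.
  by have := F_unsat sigma; rewrite -has_predC.
have := nth_find set0 hasF; rewrite has_find in hasF.
rewrite /falsified_axiom val_insubd hasF /sat_clause negb_exists => /forallP unsat_l.
apply/subsetP => -[v p] vp; rewrite inE sn ltn_ord /=.
move: (unsat_l (v, p)); rewrite vp /sat_lit /sigma /= => {vp}.
by case: (nth false s v); case: p.
Qed.

End FalsifiedAxiom.

Section Layout.
Variables n m l : nat.
Local Notation M := m.+1.
Local Notation L := l.+1.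

Definition width := M + 2 * M * L.
Definition layout_size := n.+1 * width + M.
Definition slot_pos (k : nat) (x : 'I_M) := k * width + x.
Definition query_pos (k : nat) (y : 'I_(2 * M)) (a : 'I_L) :=
  k * width + M + (a * (2 * M) + y).

Inductive node_kind := Slot of nat & 'I_M | Query of nat & 'I_(2 * M) & 'I_L | Pad.

Lemma double_gt0 : 0 < 2 * M. Proof. by []. Qed.

Definition kind_of_pos (r : nat) : node_kind :=
  let k := r %/ width in let o := r %% width in
  if o < M then (if k <= n.+1 then Slot k (inord o) else Pad)
  else if k < n.+1 then
    Query k (Ordinal (ltn_pmod (o - M) double_gt0)) (inord ((o - M) %/ (2 * M)))
  else Pad.

Lemma query_offset_lt (y : 'I_(2 * M)) (a : 'I_L) : a * (2 * M) + y < 2 * M * L.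
Proof. by have := ltn_ord y; have := ltn_ord a; nia. Qed.

Lemma divmod_width k o : o < width ->
  (k * width + o) %/ width = k /\ (k * width + o) %% width = o.
Proof.
move=> ow; have width_gt0 : 0 < width by [].
by rewrite divnMDl // divn_small // addn0 modnMDl modn_small.
Qed.

Lemma kind_of_slot_pos k x : k <= n.+1 -> kind_of_pos (slot_pos k x) = Slot k x.
Proof.
move=> kn; have xM := ltn_ord x; rewrite /kind_of_pos.
have [-> ->] : (slot_pos k x) %/ width = k /\ (slot_pos k x) %% width = x.
  by apply: divmod_width; rewrite /width; lia.
by rewrite xM kn inord_val.
Qed.

Lemma kind_of_query_pos k y a : k < n.+1 -> kind_of_pos (query_pos k y a) = Query k y a.
Proof.
move=> kn; have offset := query_offset_lt y a; rewrite /kind_of_pos.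
have [-> ->] : query_pos k y a %/ width = k /\
               query_pos k y a %% width = M + (a * (2 * M) + y).
  by rewrite /query_pos -addnA; apply: divmod_width; rewrite /width ltn_add2l.
rewrite ltnNge leq_addr /= kn addKn.
have yM := ltn_ord y; congr Query; apply: val_inj => /=.
- by rewrite modnMDl modn_small.
- by rewrite divnMDl // divn_small // addn0 inordK.
Qed.

Lemma kind_of_pos_slotE r k x : kind_of_pos r = Slot k x -> k <= n.+1 /\ r = slot_pos k x.
Proof.
rewrite /kind_of_pos /slot_pos; case: ifP => oM; last by case: ifP.
case: ifP => // kn [<- <-]; split => //.
by rewrite inordK // {1}(divn_eq r width).
Qed.

Lemma kind_of_pos_queryE r k y a : kind_of_pos r = Query k y a ->
  k < n.+1 /\ r = query_pos k y a.
Proof.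
rewrite /kind_of_pos /query_pos; case: ifP => oM; first by case: ifP.
case: ifP => // kn [<- <- <-]; split => //.
have width_gt0 : 0 < width by [].
have rw := ltn_pmod r width_gt0.
have q_lt : (r %% width - M) %/ (2 * M) < L.
  by rewrite ltn_divLR //; move: rw; rewrite /width mulnC; lia.
rewrite /= inordK // {1}(divn_eq r width) -!addnA.
by rewrite -(divn_eq (r %% width - M) (2 * M)) subnKC // leqNgt oM.
Qed.

Lemma kind_of_pos0 : kind_of_pos 0 = Slot 0 ord0.
Proof. exact: (kind_of_slot_pos ord0 (leq0n _)). Qed.

Lemma slot_pos_lt_query_pos k x y a : slot_pos k x < query_pos k y a.
Proof. by have := ltn_ord x; rewrite /slot_pos /query_pos; lia. Qed.

Lemma query_pos_lt_slot_pos k y a z : query_pos k y a < slot_pos k.+1 z.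
Proof.
have := query_offset_lt y a; rewrite /query_pos /slot_pos (mulSnr k) /width; lia.
Qed.

Lemma ltn_query_pos k y (a b : 'I_L) : a < b -> query_pos k y a < query_pos k y b.
Proof. by move=> ab; rewrite /query_pos !ltn_add2l ltn_add2r ltn_pmul2r. Qed.

Lemma slot_pos_lt_size k x : k <= n.+1 -> slot_pos k x < layout_size.
Proof.
move=> kn; have := ltn_ord x.
have : k * width <= n.+1 * width by rewrite leq_mul2r kn orbT.
rewrite /slot_pos /layout_size; lia.
Qed.

Lemma query_pos_lt_size k y a : k < n.+1 -> query_pos k y a < layout_size.
Proof.
move=> kn; apply: ltn_trans (query_pos_lt_slot_pos k y a ord0) _.
exact: slot_pos_lt_size.
Qed.

Section Refuter.
Variables (F : cnf n.+1) (F_nonempty : 0 < size F) (sF : nat).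

(* Positions are counted from the last node; [node_at i r] falls back to [i] when [r]
   is out of range. *)
Definition node_pos (i : 'I_sF) := sF.-1 - i.
Definition node_at (i : 'I_sF) (r : nat) : 'I_sF := insubd i (sF.-1 - r).
Definition ref_at (i : 'I_sF) (r : nat) : 'I_(size F) + 'I_sF := inr (node_at i r).
Definition axiom0 : 'I_(size F) + 'I_sF := inl (Ordinal F_nonempty).

Definition slot_node (i : 'I_sF) (k : nat) (x : 'I_M) (d : seq bool) :
    rnode (size F) sF n.+1 :=
  RNode (assign_clause n.+1 d)
    (if k < n.+1 then
       Resol (ref_at i (query_pos k (join_bit x false) ord0))
             (ref_at i (query_pos k (join_bit x true) ord0)) (inord k)
     else Weaken (inl (falsified_axiom F_nonempty d))).

Definition query_clause (y : 'I_(2 * M)) (a : 'I_L) (fz : 'I_(2 * M)) (sa : 'I_L)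
    (d : seq bool) : clause n.+1 :=
  if [&& fz != y, sa == a & a != 0 :> nat] then setT
  else assign_clause n.+1 (rcons d (take_bit y)).

Definition query_node (i : 'I_sF) (k : nat) (y : 'I_(2 * M)) (a : 'I_L)
    (z : 'I_M) (fz : 'I_(2 * M)) (sa : 'I_L) (d : seq bool) : rnode (size F) sF n.+1 :=
  RNode (query_clause y a fz sa d)
    (if fz == y then Weaken (ref_at i (slot_pos k.+1 z))
     else if a < sa then Weaken (ref_at i (query_pos k y sa))
     else Weaken axiom0).

Definition node_of (I : rw_inst L M) (i : 'I_sF) : rnode (size F) sF n.+1 :=
  match kind_of_pos (node_pos i) with
  | Slot k x => slot_node i k x (decode I k x)
  | Query k y a =>
      query_node i k y a (rw_g I y a) (rw_f I (rw_g I y a)) (rw_S I y a)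
        (decode I k (drop_bit y))
  | Pad => RNode setT (Weaken axiom0)
  end.

Definition node_dt (i : 'I_sF) : dtree (@rw_ans L M) (rnode (size F) sF n.+1) :=
  match kind_of_pos (node_pos i) with
  | Slot k x => dt_bind (decode_dt L k x) (fun d => DLeaf (slot_node i k x d))
  | Query k y a =>
      DQuery (inr (y, a) : rw_query L M) (fun z : 'I_M =>
      DQuery (inl (inl z) : rw_query L M) (fun fz : 'I_(2 * M) =>
      DQuery (inl (inr (y, a)) : rw_query L M) (fun sa : 'I_L =>
      dt_bind (decode_dt L k (drop_bit y))
        (fun d => DLeaf (query_node i k y a z fz sa d)))))
  | Pad => DLeaf (RNode setT (Weaken axiom0))
  end.

Definition sol_at (i : 'I_sF) : 'I_(2 * M) * 'I_L :=
  if kind_of_pos (node_pos i) is Query _ y a then (y, a) else (join_bit ord0 false, ord0).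

Lemma node_dtE I i : dt_eval (rw_oracle I) (node_dt i) = node_of I i.
Proof.
by rewrite /node_dt /node_of; case: kind_of_pos => [k x|k y a|] //=;
  rewrite dt_eval_bind decode_dtE.
Qed.

Lemma size_node_dt_queries x i : size (dt_queries x (node_dt i)) <= n.+4.
Proof.
rewrite /node_dt; case ki: kind_of_pos => [k z|k y a|] //=.
- have [kn _] := kind_of_pos_slotE ki.
  by rewrite dt_queries_bind size_cat size_decode_dt_queries /= addn0; lia.
- have [kn _] := kind_of_pos_queryE ki.
  by rewrite dt_queries_bind size_cat size_decode_dt_queries /=; lia.
Qed.

Hypothesis layout_fits : layout_size <= sF.

Lemma node_pos_at i r : r < sF -> node_pos (node_at i r) = r.
Proof. by move=> rs; rewrite /node_pos val_insubd; case: ifP; lia. Qed.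

Lemma ref_before_at i r : r < sF -> ref_before i (ref_at i r) = (node_pos i < r).
Proof.
move=> rs; have := ltn_ord i; rewrite /= /node_pos val_insubd ifT; last by lia.
by move=> ?; apply/idP/idP; lia.
Qed.

Lemma node_of_slot I i k x : kind_of_pos (node_pos i) = Slot k x ->
  node_of I i = slot_node i k x (decode I k x).
Proof. by rewrite /node_of => ->. Qed.

Lemma node_of_query I i k y a : kind_of_pos (node_pos i) = Query k y a ->
  node_of I i = query_node i k y a (rw_g I y a) (rw_f I (rw_g I y a)) (rw_S I y a)
                  (decode I k (drop_bit y)).
Proof. by rewrite /node_of => ->. Qed.

Lemma clause_at_slot I i k x : k <= n.+1 ->
  rn_clause (node_of I (node_at i (slot_pos k x))) = assign_clause n.+1 (decode I k x).
Proof.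
move=> kn; rewrite /node_of node_pos_at ?kind_of_slot_pos //.
exact: leq_trans (slot_pos_lt_size x kn) layout_fits.
Qed.

Lemma clause_at_query I i k y a : k < n.+1 ->
  rn_clause (node_of I (node_at i (query_pos k y a))) =
  query_clause y a (rw_f I (rw_g I y a)) (rw_S I y a) (decode I k (drop_bit y)).
Proof.
move=> kn; rewrite /node_of node_pos_at ?kind_of_query_pos //.
exact: leq_trans (query_pos_lt_size y a kn) layout_fits.
Qed.

Lemma last_node_empty I (i : 'I_sF) : (i : nat) = sF.-1 -> rn_clause (node_of I i) = set0.
Proof.
by move=> last; rewrite /node_of /node_pos last subnn kind_of_pos0 /= assign_clause_nil.
Qed.

Hypothesis F_unsat : unsat_cnf F.

Lemma slot_node_valid I i k x : kind_of_pos (node_pos i) = Slot k x ->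
  node_valid (node_of I) i.
Proof.
move=> ki; have [kn ri] := kind_of_pos_slotE ki.
split; last exact: last_node_empty.
rewrite (node_of_slot I ki) /=; set d := decode I k x.
case: ifP => [k_var | k_last].
- have before b : ref_before i (ref_at i (query_pos k (join_bit x b) ord0)).
    rewrite ref_before_at ?ri ?slot_pos_lt_query_pos //.
    exact: leq_trans (query_pos_lt_size _ _ k_var) layout_fits.
  do 2![split; first exact: before].
  have kd : (inord k : 'I_n.+1) = size d :> nat by rewrite size_decode inordK.
  exists (assign_clause n.+1 d), (assign_clause n.+1 d).
  rewrite /= !clause_at_query // /query_clause !andbF !drop_join_bit !take_join_bit.
  by rewrite !(assign_clause_rcons _ kd) setUid.
- split => //; exists (assign_clause n.+1 d).
  have dn : size d = n.+1.
    by rewrite size_decode; apply/eqP; rewrite eqn_leq kn leqNgt k_last.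
  by rewrite /= (setUidPr (falsified_axiom_sub F_nonempty F_unsat dn)).
Qed.

Lemma query_node_valid I i k y a : kind_of_pos (node_pos i) = Query k y a ->
  node_valid (node_of I) i \/ rw_sol I (y, a).
Proof.
move=> ki; have [kn ri] := kind_of_pos_queryE ki.
have fits r : r < layout_size -> r < sF by move/leq_trans; apply.
have := @last_node_empty I i.
rewrite /node_valid (node_of_query I ki) /query_node /rw_sol /= => last_ok.
set z := rw_g I y a; set sa := rw_S I y a; set d := decode I k (drop_bit y).
case: (eqVneq (rw_f I z) y) => [fzy | fzy]; last rewrite andbT.
- left; split => //; split.
    by rewrite ref_before_at ?ri ?query_pos_lt_slot_pos // fits // slot_pos_lt_size.
  exists set0; rewrite setU0 /= clause_at_slot //=.
  by rewrite /query_clause fzy eqxx.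
case: (ltngtP a sa) => [a_lt | sa_lt | a_eq].
- have sa_a : (sa == a) = false by apply: gtn_eqF.
  case stuck: [&& rw_f I (rw_g I y sa) != y, rw_S I y sa == sa & sa != 0 :> nat].
    by right; case/and3P: stuck => _ sa_fix _; rewrite /iter_sol a_lt sa_fix !orbT.
  left; split => //; split.
    by rewrite ref_before_at ?ri ?ltn_query_pos // fits // query_pos_lt_size.
  exists set0; rewrite setU0 /= clause_at_query //.
  by rewrite /query_clause stuck sa_a andbF.
- by right; rewrite /iter_sol sa_lt orbT.
case: (eqVneq (a : nat) 0) => [a0 | a_nz].
  by right; rewrite /iter_sol -a_eq a0 eqxx.
have sa_a : sa == a by rewrite -val_eqE /= a_eq.
left; split => //; split => //.
by exists setT; rewrite /query_clause fzy sa_a a_nz setUT.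
Qed.

Lemma pad_node_valid I i : kind_of_pos (node_pos i) = Pad -> node_valid (node_of I) i.
Proof.
move=> ki; split; last exact: last_node_empty.
have -> : node_of I i = RNode setT (Weaken axiom0) by rewrite /node_of ki.
by split => //; exists setT; rewrite setUT.
Qed.

Lemma node_valid_or_sol I i : node_valid (node_of I) i \/ rw_sol I (sol_at i).
Proof.
rewrite /sol_at; case ki: kind_of_pos => [k x|k y a|].
- by left; apply: slot_node_valid ki.
- exact: query_node_valid ki.
- by left; apply: pad_node_valid.
Qed.

End Refuter.
End Layout.

Theorem theorem4p4 :
  exists C c : nat, (2 <= C)%N /\
    forall L M n : nat, (1 <= L)%N -> (1 <= M)%N -> (1 <= n)%N ->
    forall (F : cnf n) (sF : nat),
      unsat_cnf F ->
      (C * (n * L * M + size F) <= sF)%N ->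
      res_size_gt F sF ->
      rw_refuter_reduction L M F sF (c * n).
Proof.
exists 4, 4; split => //.
move=> [|l] [|m] [|n] // _ _ _ F sF F_unsat sF_large _.
have F_nonempty : 0 < size F by case: F F_unsat {sF_large} => // /(_ (fun=> true)).
have fits : layout_size n m l <= sF.
  by move: sF_large F_nonempty; rewrite /layout_size /width; nia.
exists (@node_dt _ m l _ F_nonempty sF), (fun i => DLeaf (sol_at n m l i)); split.
- move=> i; split => x; apply: leq_trans (size_undup _) _ => //=.
  by apply: leq_trans (size_node_dt_queries _ _ _) _; lia.
- move=> I i invalid; have [valid | //] := node_valid_or_sol F_nonempty fits F_unsat I i.
  by case: invalid; apply: node_valid_ext valid => j; rewrite node_dtE.
Qed.
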